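(* Let $R$ be a ring and $G$ a group such that the group ring $RG$ is a DT ring and $2\in\Delta(R)$. Then $G$ is a $2$-group.
   Context: All rings are associative with identity; $U(R)$ is the group of units. $\Delta(R)=\{x\in R: x+u\in U(R)\text{ for all }u\in U(R)\}$. $\mathrm{Tr}(R)=\{x\in R: x^3=x\}$. A ring $R$ is a DT ring if every $r\in R$ can be written $r=e+d$ with $e\in\mathrm{Tr}(R)$ and $d\in\Delta(R)$. $RG$ denotes the group ring. *)

From HB Require Import structures.
From mathcomp Require Import all_boot all_order all_algebra.
From mathcomp Require Import finmap.
Set Implicit Arguments. Unset Strict Implicit. Unset Printing Implicit Defensive.
Import GRing.Theory.
Local Open Scope fset_scope.

Section RingNotions.
Variable R : nzRingType.
Local Open Scope ring_scope.
Definition is_unit (u : R) : Prop := exists v : R, u * v = 1 /\ v * u = 1.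
Definition in_Delta (x : R) : Prop := forall u : R, is_unit u -> is_unit (x + u).
End RingNotions.

(* The group ring RG of an arbitrary (possibly infinite) group G over R:
   finitely supported functions G -> R, with pointwise addition and
   convolution product. *)
Section GroupRing.
Variables (R : nzRingType) (G : groupType).
Local Open Scope ring_scope.

Definition grpring := {fsfun G -> R with 0}.

Definition gr_one : grpring :=
  [fsfun x in [fset 1%g] => (1 : R)].

Definition gr_add (a b : grpring) : grpring :=
  [fsfun x in finsupp a `|` finsupp b => a x + b x].

Definition gr_mul (a b : grpring) : grpring :=
  [fsfun x in [fset (h * k)%g | h in finsupp a, k in finsupp b] =>
     \sum_(h <- finsupp a) a h * b (h^-1 * x)%g].

Definition gr_unit (u : grpring) : Prop :=
  exists v, gr_mul u v = gr_one /\ gr_mul v u = gr_one.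
Definition gr_Delta (x : grpring) : Prop :=
  forall u, gr_unit u -> gr_unit (gr_add x u).
Definition gr_Tr (e : grpring) : Prop := gr_mul e (gr_mul e e) = e.
Definition grpring_DT : Prop :=
  forall r : grpring, exists e d, gr_Tr e /\ gr_Delta d /\ r = gr_add e d.
End GroupRing.

Definition two_group (G : groupType) : Prop :=
  forall g : G, exists n : nat, (g ^+ (2 ^ n))%g = 1%g.

From HB Require Import structures.
From mathcomp Require Import all_boot all_order all_algebra.
From mathcomp Require Import finmap zify.
From Stdlib Require Import Classical.
Set Implicit Arguments. Unset Strict Implicit. Unset Printing Implicit Defensive.
Import GRing.Theory.
Local Open Scope ring_scope.

(* In a DT ring, [a^3 - a] lies in Delta for every [a] that multiplies Delta into
   Delta on both sides, in particular for every sum of units.  For [a = 2] this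
   lifts [2 \in Delta(R)] to [2 \in Delta(RG)], as [6 = 2^3 - 2] and [3 = 2 + 1] is
   a unit; for [a = 1 + g] it gives [1 + g \in Delta(RG)], since
   [(1 + g)^3 - (1 + g) = (1 + g) g (2 + g)] with [g (2 + g)] a unit.  If [g] has
   order [2^k o] with [o] odd, then [x = g^(2^k)] makes [1 + x + ... + x^(o-1)] a
   unit killed by [x - 1], so [x = 1].  If [g] had infinite order, then
   [1 + g + g^2 = g + (1 + g^2)] would be a unit of [RG], which comparing
   coefficients along the powers of [g^3] rules out. *)

Section GroupRingStructure.
Variables (R : nzRingType) (G : groupType).
Notation RG := (grpring R G).

Lemma coef_out (a : RG) (A : {fset G}) x : (finsupp a `<=` A)%fset -> x \notin A -> a x = 0.
Proof. by move=> /fsubsetP sA xA; apply: fsfun_dflt; apply: contra xA; apply: sA. Qed.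

Lemma coef_gr_add (a b : RG) x : gr_add a b x = a x + b x.
Proof.
rewrite fsfunE in_fsetU; case: ifP => // /norP[ax bx].
by rewrite !fsfun_dflt ?addr0.
Qed.

Lemma sum_if_eq (B : {fset G}) (F : G -> R) y : (y \notin B -> F y = 0) ->
  \sum_(k <- B) (if k == y then F k else 0) = F y.
Proof.
move=> Fy; have [yB | yB] := boolP (y \in B).
  rewrite (big_fsetD1 y yB) eqxx big1_fset /= ?addr0 // => k.
  by rewrite in_fsetD1 => /andP[/negbTE ->].
rewrite Fy // big1_fset // => k kB _; case: eqP => // ky.
by rewrite -ky kB in yB.
Qed.

Lemma coef_gr_mull (a b : RG) (A : {fset G}) x : (finsupp a `<=` A)%fset ->
  gr_mul a b x = \sum_(h <- A) a h * b (h^-1 * x)%g.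
Proof.
move=> sA; rewrite fsfunE -(big_fset_incl _ sA); last first.
  by move=> h _ /fsfun_dflt ->; rewrite mul0r.
case: ifP => // /negbT abx; rewrite big1_fset // => h ha _.
have [hb | /fsfun_dflt ->] := boolP ((h^-1 * x)%g \in finsupp b); last by rewrite mulr0.
by case/negP: abx; apply/imfset2P; exists h => //; exists (h^-1 * x)%g; rewrite ?mulVKg.
Qed.

Lemma coef_gr_mulr (a b : RG) (B : {fset G}) x : (finsupp b `<=` B)%fset ->
  gr_mul a b x = \sum_(k <- B) a (x * k^-1)%g * b k.
Proof.
move=> sB; rewrite (coef_gr_mull b x (fsubset_refl (finsupp a))).
have eq_hk h k : (k == (h^-1 * x)%g) = (h == (x * k^-1)%g).
  by apply/eqP/eqP => [->|->]; rewrite invgM invgK ?mulVKg ?mulgK ?mulKg ?mulgVK.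
transitivity (\sum_(h <- finsupp a) \sum_(k <- B)
    if h == (x * k^-1)%g then a h * b k else 0).
  apply: eq_bigr => h _; under eq_bigr do rewrite -eq_hk.
  by rewrite sum_if_eq // => /(coef_out sB) ->; rewrite mulr0.
rewrite exchange_big; apply: eq_bigr => k _.
by rewrite sum_if_eq // => /fsfun_dflt ->; rewrite mul0r.
Qed.

Lemma gr_mulA : associative (@gr_mul R G).
Proof.
move=> a b c; apply/fsfunP => x.
rewrite (coef_gr_mull _ x (fsubset_refl (finsupp a))).
rewrite (coef_gr_mulr _ x (fsubset_refl (finsupp c))).
under eq_bigr => h _ do rewrite (coef_gr_mulr _ _ (fsubset_refl (finsupp c))) mulr_sumr.
under [RHS]eq_bigr => k _ do
  rewrite (coef_gr_mull _ _ (fsubset_refl (finsupp a))) mulr_suml.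
rewrite exchange_big; apply: eq_bigr => k _; apply: eq_bigr => h _.
by rewrite mulgA mulrA.
Qed.

Definition gr_zero : RG := [fsfun].
Definition gr_opp (a : RG) : RG := [fsfun x in finsupp a => - a x].
Definition gr_mono (r : R) (g : G) : RG := [fsfun x in [fset g]%fset => r].

Lemma coef_gr_opp (a : RG) x : gr_opp a x = - a x.
Proof. by rewrite fsfunE; case: ifP => // /negbT/fsfun_dflt ->; rewrite oppr0. Qed.

Lemma coef_gr_mono r g x : gr_mono r g x = if x == g then r else 0.
Proof. by rewrite fsfunE in_fset1. Qed.

Lemma coef_gr_monoMl r g (b : RG) x : gr_mul (gr_mono r g) b x = r * b (g^-1 * x)%g.
Proof.
have sg : (finsupp (gr_mono r g) `<=` [fset g])%fset by exact: finsupp_sub.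
by rewrite (coef_gr_mull _ x sg) big_seq_fset1 coef_gr_mono eqxx.
Qed.

Lemma coef_gr_monoMr (b : RG) r g x : gr_mul b (gr_mono r g) x = b (x * g^-1)%g * r.
Proof.
have sg : (finsupp (gr_mono r g) `<=` [fset g])%fset by exact: finsupp_sub.
by rewrite (coef_gr_mulr _ x sg) big_seq_fset1 coef_gr_mono eqxx.
Qed.

Lemma gr_addA : associative (@gr_add R G).
Proof. by move=> a b c; apply/fsfunP => x; rewrite !coef_gr_add addrA. Qed.

Lemma gr_addC : commutative (@gr_add R G).
Proof. by move=> a b; apply/fsfunP => x; rewrite !coef_gr_add addrC. Qed.

Lemma gr_add0 : left_id gr_zero (@gr_add R G).
Proof. by move=> a; apply/fsfunP => x; rewrite coef_gr_add fsfunE add0r. Qed.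

Lemma gr_addN : left_inverse gr_zero gr_opp (@gr_add R G).
Proof. by move=> a; apply/fsfunP => x; rewrite coef_gr_add coef_gr_opp fsfunE addNr. Qed.

Lemma gr_mulDr : right_distributive (@gr_mul R G) (@gr_add R G).
Proof.
move=> a b c; apply/fsfunP => x.
rewrite coef_gr_add !(coef_gr_mull _ x (fsubset_refl (finsupp a))) -big_split.
by apply: eq_bigr => h _; rewrite coef_gr_add mulrDr.
Qed.

Lemma gr_mulDl : left_distributive (@gr_mul R G) (@gr_add R G).
Proof.
move=> a b c; apply/fsfunP => x.
rewrite coef_gr_add !(coef_gr_mulr _ x (fsubset_refl (finsupp c))) -big_split.
by apply: eq_bigr => k _; rewrite coef_gr_add mulrDl.
Qed.

Lemma gr_one_mono : gr_one R G = gr_mono 1 1%g.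
Proof. by []. Qed.

Lemma gr_mul1 : left_id (gr_one R G) (@gr_mul R G).
Proof.
by move=> a; apply/fsfunP => x; rewrite gr_one_mono coef_gr_monoMl mul1r invg1 mul1g.
Qed.

Lemma gr_mulr1 : right_id (gr_one R G) (@gr_mul R G).
Proof.
by move=> a; apply/fsfunP => x; rewrite gr_one_mono coef_gr_monoMr mulr1 invg1 mulg1.
Qed.

Lemma gr_one_neq0 : gr_one R G != gr_zero.
Proof.
apply/eqP => /fsfunP /(_ 1%g) /eqP.
by rewrite gr_one_mono coef_gr_mono eqxx fsfunE oner_eq0.
Qed.

End GroupRingStructure.

HB.instance Definition _ (R : nzRingType) (G : groupType) := Choice.on (grpring R G).
HB.instance Definition _ (R : nzRingType) (G : groupType) :=
  GRing.isZmodule.Build (grpring R G)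
    (@gr_addA R G) (@gr_addC R G) (@gr_add0 R G) (@gr_addN R G).
HB.instance Definition _ (R : nzRingType) (G : groupType) :=
  GRing.Zmodule_isNzRing.Build (grpring R G) (@gr_mulA R G) (@gr_mul1 R G)
    (@gr_mulr1 R G) (@gr_mulDl R G) (@gr_mulDr R G) (@gr_one_neq0 R G).

Section Delta.
Variable S : nzRingType.
Implicit Types x y u v e d a : S.

Lemma is_unit1 : is_unit (1 : S).
Proof. by exists 1; rewrite mulr1. Qed.

Lemma is_unitM u v : is_unit u -> is_unit v -> is_unit (u * v).
Proof.
move=> [u' [uu' u'u]] [v' [vv' v'v]]; exists (v' * u'); split.
  by rewrite mulrA -(mulrA u) vv' mulr1.
by rewrite mulrA -(mulrA v') u'u mulr1.
Qed.

Lemma is_unitN u : is_unit u -> is_unit (- u).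
Proof. by move=> [u' [uu' u'u]]; exists (- u'); rewrite !mulrNN. Qed.

Lemma is_unitX u n : is_unit u -> is_unit (u ^+ n).
Proof.
move=> hu; elim: n => [|n IHn]; first by rewrite expr0; apply: is_unit1.
by rewrite exprS; apply: is_unitM.
Qed.

Lemma in_Delta0 : in_Delta (0 : S).
Proof. by move=> u; rewrite add0r. Qed.

Lemma in_DeltaN x : in_Delta x -> in_Delta (- x).
Proof. by move=> Dx u /is_unitN /Dx /is_unitN; rewrite opprD opprK. Qed.

Lemma in_DeltaD x y : in_Delta x -> in_Delta y -> in_Delta (x + y).
Proof. by move=> Dx Dy u Uu; rewrite -addrA; apply/Dx/Dy. Qed.

Lemma is_unit1D x : in_Delta x -> is_unit (1 + x).
Proof. by move=> Dx; rewrite addrC; apply/Dx/is_unit1. Qed.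

Lemma in_DeltaMl v x : is_unit v -> in_Delta x -> in_Delta (v * x).
Proof.
move=> [v' [vv' v'v]] Dx u Uu.
have -> : v * x + u = v * (x + v' * u) by rewrite mulrDr mulrA vv' mul1r.
apply: is_unitM; first by exists v'.
by apply/Dx/is_unitM => //; exists v.
Qed.

Lemma in_DeltaMr v x : is_unit v -> in_Delta x -> in_Delta (x * v).
Proof.
move=> [v' [vv' v'v]] Dx u Uu.
have -> : x * v + u = (x + u * v') * v by rewrite mulrDl -mulrA v'v mulr1.
apply: is_unitM; last by exists v'.
by apply/Dx/is_unitM => //; exists v.
Qed.

(* [1 + x y u'] is [(1 + x)(1 + y u')] minus an element of Delta. *)
Lemma in_DeltaM x y : in_Delta x -> in_Delta y -> in_Delta (x * y).
Proof.
move=> Dx Dy u [u' [uu' u'u]].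
have Dyu' : in_Delta (y * u') by apply: in_DeltaMr => //; exists u.
have -> : x * y + u = (1 + x * (y * u')) * u.
  by rewrite mulrDl mul1r -!mulrA u'u mulr1 addrC.
apply: is_unitM; last by exists u'.
have -> : 1 + x * (y * u') = - (x + y * u') + (1 + x) * (1 + y * u').
  rewrite mulrDl mul1r mulrDr mulr1 [x + x * _]addrC addrACA [y * u' + x]addrC.
  by rewrite [_ + (x + _)]addrC addKr.
by apply: (in_DeltaN (in_DeltaD Dx Dyu')); apply: is_unitM; apply: is_unit1D.
Qed.

Definition Delta_multiplier c := forall x, in_Delta x -> in_Delta (c * x) /\ in_Delta (x * c).

Lemma Delta_multiplier_unit v : is_unit v -> Delta_multiplier v.
Proof. by move=> Uv x Dx; split; [apply: in_DeltaMl | apply: in_DeltaMr]. Qed.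

Lemma Delta_multiplier_Delta d : in_Delta d -> Delta_multiplier d.
Proof. by move=> Dd x Dx; split; apply: in_DeltaM. Qed.

Lemma Delta_multiplierD a b :
  Delta_multiplier a -> Delta_multiplier b -> Delta_multiplier (a + b).
Proof.
move=> Ma Mb x Dx; have [Dax Dxa] := Ma x Dx; have [Dbx Dxb] := Mb x Dx.
by rewrite mulrDl mulrDr; split; apply: in_DeltaD.
Qed.

Lemma Delta_multiplierN a : Delta_multiplier a -> Delta_multiplier (- a).
Proof.
move=> Ma x Dx; have [Dax Dxa] := Ma x Dx.
by rewrite mulNr mulrN; split; apply: in_DeltaN.
Qed.

Lemma Delta_multiplierM a b :
  Delta_multiplier a -> Delta_multiplier b -> Delta_multiplier (a * b).
Proof.
move=> Ma Mb x Dx; split; first by rewrite -mulrA; apply: (Ma _ (Mb x Dx).1).1.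
by rewrite mulrA; apply: (Mb _ (Ma x Dx).2).2.
Qed.

Lemma in_Delta_cube_sub e d : e * (e * e) = e -> in_Delta d ->
  Delta_multiplier (e + d) -> in_Delta ((e + d) * ((e + d) * (e + d)) - (e + d)).
Proof.
move=> e3 Dd Ma; set a := e + d.
have Me : Delta_multiplier e.
  have -> : e = a - d by rewrite addrK.
  exact: Delta_multiplierD Ma (Delta_multiplierN (Delta_multiplier_Delta Dd)).
have cube_diff (z w : S) : z * (z * z) - w * (w * w)
    = (z - w) * (z * z) + w * ((z - w) * z) + w * (w * (z - w)).
  by rewrite !(mulrBl, mulrBr) !addrA !subrK.
have ad : a - e = d by rewrite addrC addKr.
have -> : a * (a * a) - a = (a * (a * a) - e * (e * e)) - d.
  by rewrite e3 /a opprD addrA.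
rewrite cube_diff ad; apply: in_DeltaD; last exact: in_DeltaN.
apply: in_DeltaD; first apply: in_DeltaD.
- exact: (Delta_multiplierM Ma Ma Dd).2.
- exact: (Me _ (Ma _ Dd).2).1.
- exact: (Me _ (Me _ Dd).1).1.
Qed.

Lemma in_Delta_1D_of_cube x : in_Delta (2%:R : S) -> is_unit x ->
  in_Delta ((1 + x) * ((1 + x) * (1 + x)) - (1 + x)) -> in_Delta (1 + x).
Proof.
move=> D2 Ux.
have -> : (1 + x) * ((1 + x) * (1 + x)) - (1 + x) = (1 + x) * (x * (2%:R + x)).
  rewrite -{4}[1 + x]mulr1 -mulrBr; congr (_ * _).
  rewrite mulrDl mul1r mulrDr mulr1 [x * (_ + x)]mulrDr mulr_natr mulr2n.
  by rewrite addrAC [1 + x]addrC addrK addrA.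
have [w [ww' w'w]] : is_unit (x * (2%:R + x)) by apply/is_unitM/D2.
move=> D; have -> : 1 + x = (1 + x) * (x * (2%:R + x)) * w by rewrite -mulrA ww' mulr1.
by apply: (in_DeltaMr _ D); exists (x * (2%:R + x)).
Qed.

Lemma unit_odd_order_eq1 x n : is_unit x -> in_Delta (1 + x) -> odd n ->
  x ^+ n = 1 -> x = 1.
Proof.
move=> Ux D1x n_odd xn1.
have geom_Delta k : in_Delta (\sum_(i < k.*2.+1) x ^+ i - 1).
  elim: k => [|k IHk]; first by rewrite big_ord1 expr0 subrr; apply: in_Delta0.
  rewrite doubleS 2!big_ord_recr /=.
  have -> : \sum_(i < k.*2.+1) x ^+ i + x ^+ k.*2.+1 + x ^+ k.*2.+2 - 1
      = (\sum_(i < k.*2.+1) x ^+ i - 1) + x ^+ k.*2.+1 * (1 + x).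
    by rewrite mulrDr mulr1 -exprSr -[_ + _ + x ^+ _.+1]addrA addrAC.
  by apply: in_DeltaD IHk _; apply: in_DeltaMl (is_unitX _ Ux) D1x.
have n_eq : n = n./2.*2.+1 by rewrite -[n in LHS]odd_double_half n_odd.
rewrite n_eq in xn1.
have [s' [ss' _]] := is_unit1D (geom_Delta n./2); rewrite addrC subrK in ss'.
move: (subrX1 x n./2.*2.+1); rewrite xn1 subrr => /(congr1 (fun t => t * s')).
by rewrite mul0r -mulrA ss' mulr1 => /esym/eqP; rewrite subr_eq0 => /eqP.
Qed.

End Delta.

Section GroupRingElements.
Variables (R : nzRingType) (G : groupType).
Notation RG := (grpring R G).
Notation delta g := (@gr_mono R G 1 g).
Implicit Types (a b f : RG) (r s : R) (g h : G).

Lemma gr_mono11 : delta 1%g = 1.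
Proof. by []. Qed.

Lemma coef_grB a b x : (a - b) x = a x - b x.
Proof. by rewrite [LHS]coef_gr_add coef_gr_opp. Qed.

Lemma gr_monoD r s g : gr_mono (r + s) g = gr_mono r g + gr_mono s g.
Proof.
apply/fsfunP => x; rewrite [RHS]coef_gr_add !coef_gr_mono.
by case: ifP; rewrite ?addr0.
Qed.

Lemma gr_monoM r s g h : gr_mono r g * gr_mono s h = gr_mono (r * s) (g * h)%g.
Proof.
apply/fsfunP => x; rewrite [LHS]coef_gr_monoMl !coef_gr_mono.
have -> : ((g^-1 * x)%g == h) = (x == (g * h)%g).
  by apply/eqP/eqP => [<-|->]; rewrite ?mulVKg ?mulKg.
by case: ifP; rewrite ?mulr0.
Qed.

Lemma gr_monoX g n : delta g ^+ n = delta (g ^+ n)%g.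
Proof.
elim: n => [|n IHn]; first by rewrite expr0 expg0.
by rewrite exprS IHn gr_monoM mul1r expgS.
Qed.

Lemma natr_gr_mono n : n%:R = gr_mono (n%:R : R) (1 : G).
Proof.
elim: n => [|n IHn]; last by rewrite !mulrSr IHn gr_monoD.
by apply/fsfunP => x; rewrite coef_gr_mono fsfunE; case: ifP.
Qed.

Lemma is_unit_gr_mono r g : is_unit r -> is_unit (gr_mono r g).
Proof.
move=> [r' [rr' r'r]]; exists (gr_mono r' g^-1).
by rewrite !gr_monoM rr' r'r mulgV mulVg.
Qed.

Lemma gr_mono_eq1 g : delta g = 1 -> g = 1%g.
Proof.
rewrite -gr_mono11 => /fsfunP /(_ g); rewrite !coef_gr_mono eqxx.
by case: eqP => // _ /eqP; rewrite oner_eq0.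
Qed.

Definition infinite_order g := forall n, (0 < n)%N -> (g ^+ n)%g != 1%g.

Lemma infinite_order_expg_inj g : infinite_order g -> injective (fun n => (g ^+ n)%g).
Proof.
move=> g_inf i j /= gij; wlog le_ij : i j gij / (i <= j)%N.
  by move=> W; case: (leqP i j) => [|/ltnW] h; [apply: W | apply/esym/W].
move: gij; rewrite -(subnKC le_ij) expgnDr -{1}[(g ^+ i)%g]mulg1 => /mulgI/esym/eqP.
by have [->|/g_inf/negbTE->] := posnP (j - i); rewrite ?addn0.
Qed.

(* Otherwise [f] would be nonzero at the infinitely many distinct [g^(n+1)]. *)
Lemma coef_shift_eq0 f g : infinite_order g ->
  (forall n, f (g ^+ n.+2)%g = f (g ^+ n.+1)%g) -> f g = 0.
Proof.
move=> g_inf f_shift; apply/eqP/negPn/negP => fg_neq0.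
have f_orbit n : f (g ^+ n.+1)%g = f g by elim: n => // n IHn; rewrite f_shift.
pose s := [seq (g ^+ n.+1)%g | n <- iota 0 (#|` finsupp f|).+1].
have s_uniq : uniq s.
  by rewrite map_inj_uniq ?iota_uniq // => i j /(infinite_order_expg_inj g_inf) [].
have s_sub : {subset s <= finsupp f}.
  by move=> y /mapP [n _ ->]; rewrite mem_finsupp f_orbit.
by have := uniq_leq_size s_uniq s_sub; rewrite size_map size_iota cardfE ltnn.
Qed.

Lemma coef_mul1B f c y : (f * (1 - delta c)) y = f y - f (y * c^-1)%g.
Proof. by rewrite mulrBr mulr1 coef_grB coef_gr_monoMr mulr1. Qed.

(* Telescoping along the orbit of [c]: the coefficients of [f] are constant on
   [c^0, c^1, ...] and on [c^-1, c^-2, ...], hence vanish at [1] and at [c^-1]. *)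
Lemma coef_mul1B_orbit_eq0 f c : infinite_order c ->
  (forall n, (f * (1 - delta c)) (c ^+ n.+1)%g = 0) ->
  (forall n, (f * (1 - delta c)) (c^-1 ^+ n.+1)%g = 0) ->
  (f * (1 - delta c)) 1%g = 0.
Proof.
move=> c_inf f_pos f_neg.
have cV_inf : infinite_order c^-1 by move=> n n_gt0; rewrite expVgn invg_eq1 c_inf.
have f1 : f 1%g = 0.
  have f_shift n : f (c ^+ n.+1)%g = f (c ^+ n)%g.
    by move/eqP: (f_pos n); rewrite coef_mul1B expgSr mulgK subr_eq0 => /eqP.
  by rewrite -(expg0 c) -f_shift expg1; apply: (coef_shift_eq0 c_inf) => n.
have fcV : f (c^-1)%g = 0.
  apply: (coef_shift_eq0 cV_inf) => n.
  by move/eqP: (f_neg n); rewrite coef_mul1B -expgSr subr_eq0 => /eqP.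
by rewrite coef_mul1B mul1g f1 fcV subrr.
Qed.

(* An inverse [u] of [1 + g + g^2] satisfies [u (1 - g^3) = 1 - g], whose
   coefficient at [1] is [1] although [1 - g] vanishes on the rest of the orbit of [g^3]. *)
Lemma infinite_order_not_unit g : infinite_order g ->
  ~ is_unit (1 + delta g + delta (g ^+ 2)%g).
Proof.
move=> g_inf [u [_ u_inv]]; set c := (g ^+ 3)%g.
have geom : (1 + delta g + delta (g ^+ 2)%g) * (1 - delta g) = 1 - delta c.
  rewrite -!gr_monoX mulrBr mulr1 !mulrDl mul1r -expr2 -exprSr.
  by rewrite -[1 + _ + _ ^+ 2]addrA addrKA.
have u_geom : u * (1 - delta c) = 1 - delta g by rewrite -geom mulrA u_inv mul1r.
have coef_1Bg y : (1 - delta g) y = (if y == 1%g then 1 else 0) - (if y == g then 1 else 0).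
  by rewrite coef_grB -gr_mono11 !coef_gr_mono.
have g_exp_neq m : m != 1%N -> (g ^+ m == g)%g = false.
  move=> m_neq1; apply/negbTE; apply: contra m_neq1 => /eqP gm.
  by apply/eqP/(infinite_order_expg_inj g_inf); rewrite /= gm expg1.
have c_inf : infinite_order c by move=> n n_gt0; rewrite -expgnA g_inf ?muln_gt0.
have one_neq_g : (1 == g)%g = false by rewrite -(expg0 g) g_exp_neq.
have := coef_mul1B_orbit_eq0 (f := u) c_inf.
rewrite u_geom coef_1Bg eqxx one_neq_g subr0 => coef1_eq0.
suff : (1 : R) = 0 by move/eqP; rewrite oner_eq0.
apply: coef1_eq0 => n; rewrite coef_1Bg.
  by rewrite (negbTE (c_inf _ _)) // /c -expgnA g_exp_neq ?subrr //; lia.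
rewrite expVgn invg_eq1 (negbTE (c_inf _ _)) //.
have -> : ((c ^+ n.+1)^-1 == g)%g = false.
  apply/negbTE/eqP => cVn; move: (g_inf (3 * n.+1).+1 isT).
  by rewrite expgSr -[X in (_ * X)%g]cVn expgnA mulgV eqxx.
by rewrite subrr.
Qed.

Lemma expg_two_part_eq1 g m : (0 < m)%N -> (g ^+ m = 1)%g ->
  in_Delta (1 + delta (g ^+ (2 ^ logn 2 m)%N)%g) -> (g ^+ (2 ^ logn 2 m)%N = 1)%g.
Proof.
move=> m_gt0 gm1 D1g; have [o o_odd m_eq] := pfactor_coprime (isT : prime 2) m_gt0.
apply: gr_mono_eq1; apply: (unit_odd_order_eq1 (n := o)) D1g _ _.
- exact: is_unit_gr_mono (is_unit1 R).
- by rewrite coprime2n in o_odd.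
by rewrite gr_monoX -expgnA mulnC -m_eq gm1.
Qed.

End GroupRingElements.

Section DTGroupRing.
Variables (R : nzRingType) (G : groupType).
Hypothesis RG_DT : grpring_DT R G.
Notation RG := (grpring R G).
Notation delta g := (@gr_mono R G 1 g).

Lemma grpring_DT_cube_sub (a : RG) : Delta_multiplier a -> in_Delta (a * (a * a) - a).
Proof. by have [e [d [e3 [Dd ->]]]] := RG_DT a; apply: in_Delta_cube_sub. Qed.

Lemma grpring_DT_two_Delta : in_Delta (2%:R : R) -> in_Delta (2%:R : RG).
Proof.
move=> D2R.
have [v [v3 v3']] : is_unit (3%:R : RG).
  by rewrite natr_gr_mono; apply: is_unit_gr_mono; rewrite mulrSr; apply/D2R/is_unit1.
have D6 : in_Delta (3%:R * 2%:R : RG).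
  have -> : (3%:R * 2%:R : RG) = 2%:R * (2%:R * 2%:R) - 2%:R by rewrite -!natrM -natrB.
  apply: grpring_DT_cube_sub; rewrite mulr2n.
  by apply: Delta_multiplierD; apply/Delta_multiplier_unit/is_unit1.
have -> : (2%:R : RG) = v * (3%:R * 2%:R) by rewrite mulrA v3' mul1r.
by apply: (in_DeltaMl _ D6); exists 3%:R.
Qed.

Lemma grpring_DT_Delta_1D (g : G) : in_Delta (2%:R : R) -> in_Delta (1 + delta g).
Proof.
move=> D2R; have Ug := is_unit_gr_mono g (is_unit1 R).
apply: (in_Delta_1D_of_cube (grpring_DT_two_Delta D2R) Ug).
by apply/grpring_DT_cube_sub/Delta_multiplierD; apply: Delta_multiplier_unit;
  [apply: is_unit1 | exact: Ug].
Qed.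

End DTGroupRing.

Theorem theorem3p10 (R : nzRingType) (G : groupType) :
  grpring_DT R G -> in_Delta (2%:R : R) -> two_group G.
Proof.
move=> RG_DT D2R g; have D1 := grpring_DT_Delta_1D RG_DT _ D2R.
have [[m [m_gt0 gm1]] | no_order] := classic (exists m, (0 < m)%N /\ (g ^+ m = 1)%g).
  by exists (logn 2 m); apply: expg_two_part_eq1 (D1 _).
exfalso; apply: (@infinite_order_not_unit R G g).
  by move=> n n_gt0; apply/eqP => gn1; apply: no_order; exists n.
rewrite addrAC; apply: D1; exact: is_unit_gr_mono (is_unit1 R).
Qed.
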